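(* Let $f:\mathbb{R}^{n_x}\times U\to\mathbb{R}^{n_x}$ be a vector field with control set $U\subset\mathbb{R}^{n_u}$, let $\mathcal{D}=\{(x^i,u^i,v^i)\}_{i=1}^N$ be a dataset with $u^i\in U$ and $v^i=f(x^i,u^i)$, and let $\mathcal{E}:\mathbb{R}^{n_x}\times\mathbb{R}^{n_x}\to 2^{\mathbb{R}^{n_x}}$ be a set-valued map with closed values which is a valid uncertainty set map, i.e. $f(x,u^i)-v^i\in\mathcal{E}(x;x^i)$ for all $i\in\{1,\dots,N\}$ and all $x\in\mathbb{R}^{n_x}$. Define the Hamiltonian $H(x,p)=\max_{u\in U}p^\top f(x,u)$ and the data-driven Hamiltonian $$\widehat{H}(x,p)=\max_{i\in\{1,\dots,N\}}\ \min_{\widehat{v}^i\in v^i\oplus\mathcal{E}(x;x^i)} p^\top\widehat{v}^i .$$ Then $\widehat{H}(x,p)\le H(x,p)$ for all $x,p\in\mathbb{R}^{n_x}$.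
   Context: $\oplus$ denotes the Minkowski sum, so $v^i\oplus\mathcal{E}(x;x^i)=\{v^i+e: e\in\mathcal{E}(x;x^i)\}$. The vector field $f$ is unknown; only the dataset and the uncertainty set map are available. *)

From HB Require Import structures.
From mathcomp Require Import all_boot all_order all_algebra.
From mathcomp Require Import all_classical all_reals all_analysis.
Set Implicit Arguments. Unset Strict Implicit. Unset Printing Implicit Defensive.
Import Order.TTheory GRing.Theory Num.Theory.
Import numFieldNormedType.Exports.
Local Open Scope classical_set_scope.
Local Open Scope ring_scope.

Definition dotp {R : realType} {n : nat} (p v : 'rV[R]_n) : R :=
  \sum_(j < n) p 0 j * v 0 j.

Definition minkowski {R : realType} {n : nat} (v : 'rV[R]_n) (S : set 'rV[R]_n)
  : set 'rV[R]_n := [set v + e | e in S].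

(* H(x,p) = max_{u in U} p^T f(x,u), taken as a supremum in the extended reals *)
Definition hamiltonian {R : realType} {nx nu : nat}
  (f : 'rV[R]_nx -> 'rV[R]_nu -> 'rV[R]_nx) (U : set 'rV[R]_nu)
  (x p : 'rV[R]_nx) : \bar R :=
  ereal_sup [set (dotp p (f x u))%:E | u in U].

(* Hhat(x,p) = max_i min_{vhat in v^i (+) E(x;x^i)} p^T vhat
   (inner min as an infimum in the extended reals) *)
Definition data_hamiltonian {R : realType} {nx : nat} {N : nat}
  (xs vs : 'I_N -> 'rV[R]_nx) (E : 'rV[R]_nx -> 'rV[R]_nx -> set 'rV[R]_nx)
  (x p : 'rV[R]_nx) : \bar R :=
  \big[Order.max/-oo%E]_(i < N)
     ereal_inf [set (dotp p vh)%:E | vh in minkowski (vs i) (E x (xs i))].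

From Pilot Require Import Defs.
From HB Require Import structures.
From mathcomp Require Import all_boot all_order all_algebra.
From mathcomp Require Import all_classical all_reals all_analysis.
Import Order.TTheory GRing.Theory Num.Theory.
Import numFieldNormedType.Exports.
Local Open Scope classical_set_scope.
Local Open Scope ring_scope.

Lemma minkowskiP (R : realType) (n : nat) (v w : 'rV[R]_n) (S : set 'rV[R]_n) :
  Defs.minkowski v S w <-> S (w - v).
Proof.
split=> [[e Se <-]|Swv]; first by rewrite addrC addKr.
by exists (w - v) => //; rewrite addrC subrK.
Qed.

Lemma ereal_inf_dotp_le (R : realType) (n : nat) (p w : 'rV[R]_n)
    (S : set 'rV[R]_n) :
  S w -> (ereal_inf [set (dotp p v)%:E | v in S] <= (dotp p w)%:E)%E.
Proof. by move=> Sw; apply: ereal_inf_lbound; exists w. Qed.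

Lemma dotp_le_hamiltonian (R : realType) (nx nu : nat)
    (f : 'rV[R]_nx -> 'rV[R]_nu -> 'rV[R]_nx) (U : set 'rV[R]_nu)
    (x p : 'rV[R]_nx) (u : 'rV[R]_nu) :
  U u -> ((dotp p (f x u))%:E <= hamiltonian f U x p)%E.
Proof. by move=> Uu; apply: ereal_sup_ubound; exists u. Qed.

Theorem proposition1 (R : realType) (nx nu N : nat)
  (f : 'rV[R]_nx -> 'rV[R]_nu -> 'rV[R]_nx) (U : set 'rV[R]_nu)
  (xs vs : 'I_N -> 'rV[R]_nx) (us : 'I_N -> 'rV[R]_nu)
  (E : 'rV[R]_nx -> 'rV[R]_nx -> set 'rV[R]_nx) :
  (forall i, U (us i)) ->
  (forall i, vs i = f (xs i) (us i)) ->
  (forall x y, closed (E x y)) ->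
  (forall i x, E x (xs i) (f x (us i) - vs i)) ->
  forall x p : 'rV[R]_nx,
    (data_hamiltonian xs vs E x p <= hamiltonian f U x p)%E.
Proof.
move=> Uus _ _ validE x p.
apply: bigmax_le => [|i _]; first exact: leNye.
apply: (@le_trans _ _ (dotp p (f x (us i)))%:E); last exact: dotp_le_hamiltonian.
by apply: ereal_inf_dotp_le; apply/minkowskiP; exact: validE.
Qed.
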